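(* Let $X$ be a $\sigma$-monotonically complete Banach lattice, $E\subseteq X$ a closed subspace, and $(x_k,f_k)$ an absolute frame for $E$. Then for each $x\in E$, $\sum_{k=1}^n f_k(x)x_k\xrightarrow{o}x$ in $X$ as $n\to\infty$. In particular, for any Banach lattice $X$, each absolute frame for a closed subspace $E\subseteq X$ has expansions $\sum_{k=1}^n f_k(x)x_k$ that order converge to $x$ in $X^{**}$.
   Context: A Banach lattice is $\sigma$-monotonically complete if every increasing norm bounded sequence of positive elements has a supremum. A (Schauder) frame for a Banach space $E$ is a sequence $(x_k,f_k)\in E\times E^*$ such that $x=\sum_{k=1}^\infty f_k(x)x_k$ (norm convergence) for all $x\in E$. For $E$ a closed subspace of a Banach lattice, the frame is absolute if for each $x\in E$, $\sup_n\|\sum_{k=1}^n|f_k(x)x_k|\|<\infty$. Order convergence $y_n\xrightarrow{o}y$ means there is a net $z_\beta\downarrow0$ such that for every $\beta$ there is $n_\beta$ with $|y_n-y|\le z_\beta$ for all $n\ge n_\beta$. *)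

From HB Require Import structures.
From mathcomp Require Import all_boot all_order all_algebra.
From mathcomp Require Import all_classical all_reals all_analysis.
Set Implicit Arguments. Unset Strict Implicit. Unset Printing Implicit Defensive.
Import Order.TTheory GRing.Theory Num.Theory.
Import numFieldNormedType.Exports.
Local Open Scope classical_set_scope.
Local Open Scope ring_scope.

Definition is_ub {V : Type} (le : V -> V -> Prop) (A : set V) (m : V) : Prop :=
  forall a, A a -> le a m.
Definition is_lb {V : Type} (le : V -> V -> Prop) (A : set V) (m : V) : Prop :=
  forall a, A a -> le m a.

Definition is_sup {V : Type} (S : set V) (le : V -> V -> Prop) (A : set V) (m : V) : Prop :=
  S m /\ is_ub le A m /\ forall m', S m' -> is_ub le A m' -> le m m'.
Definition is_inf {V : Type} (S : set V) (le : V -> V -> Prop) (A : set V) (m : V) : Prop :=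
  S m /\ is_lb le A m /\ forall m', S m' -> is_lb le A m' -> le m' m.

Definition directed {I : Type} (leI : I -> I -> Prop) : Prop :=
  inhabited I /\ (forall a, leI a a) /\
  (forall a b c, leI a b -> leI b c -> leI a c) /\
  (forall a b, exists c, leI a c /\ leI b c).

(* In a vector lattice |a| = sup {a, -a}, so |a| <= z means exactly that z is an
   upper bound of {a, -a}, i.e. a <= z and -a <= z. *)
Definition ocvg {V : zmodType} (S : set V) (le : V -> V -> Prop)
    (y : nat -> V) (l : V) : Prop :=
  exists (I : Type) (leI : I -> I -> Prop) (z : I -> V),
    directed leI /\
    (forall b, S (z b)) /\
    (forall b b', leI b b' -> le (z b') (z b)) /\
    is_inf S le (range z) 0 /\
    forall b, exists nb : nat, forall n : nat, (nb <= n)%N ->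
      le (y n - l) (z b) /\ le (- (y n - l)) (z b).

Definition is_banach_lattice {R : realType} {X : completeNormedModType R}
    (le : X -> X -> Prop) (join : X -> X -> X) : Prop :=
  (forall x, le x x) /\
  (forall x y, le x y -> le y x -> x = y) /\
  (forall x y z, le x y -> le y z -> le x z) /\
  (forall x y z, le x y -> le (x + z) (y + z)) /\
  (forall (a : R) x y, 0 <= a -> le x y -> le (a *: x) (a *: y)) /\
  (forall x y, is_sup setT le [set x; y] (join x y)) /\
  (forall x y, le (join x (- x)) (join y (- y)) ->
      `|x| <= `|y|).

Definition labs {X : zmodType} (join : X -> X -> X) (x : X) : X := join x (- x).

Definition sigma_monotonically_complete {R : realType} {X : completeNormedModType R}
    (le : X -> X -> Prop) : Prop :=
  forall u : nat -> X,
    (forall n, le 0 (u n)) -> (forall n, le (u n) (u n.+1)) ->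
    (exists M : R, forall n, `|u n| <= M) ->
    exists s, is_sup setT le (range u) s.

Definition closed_subspace {R : realType} {X : normedModType R} (E : set X) : Prop :=
  closed E /\ E 0 /\
  (forall (a b : R) x y, E x -> E y -> E (a *: x + b *: y)).

(* f (a function on X) restricts to an element of E^*: linear and bounded on E *)
Definition in_dual_of {R : realType} {X : normedModType R} (E : set X) (f : X -> R) : Prop :=
  (forall (a b : R) x y, E x -> E y -> f (a *: x + b *: y) = a * f x + b * f y) /\
  (exists C : R, forall x, E x -> `|f x| <= C * `|x|).

(* partial sums  s_n = sum_{k=1}^n f_k(x) x_k  (indices shifted to start at 0) *)
Definition frame_psum {R : realType} {X : normedModType R}
    (xs : nat -> X) (fs : nat -> X -> R) (x : X) (n : nat) : X :=
  \sum_(k < n) (fs k x) *: xs k.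

Definition is_frame {R : realType} {X : normedModType R} (E : set X)
    (xs : nat -> X) (fs : nat -> X -> R) : Prop :=
  (forall k, E (xs k)) /\ (forall k, in_dual_of E (fs k)) /\
  (forall x, E x -> frame_psum xs fs x @ \oo --> x).

Definition is_absolute_frame {R : realType} {X : normedModType R}
    (join : X -> X -> X) (E : set X) (xs : nat -> X) (fs : nat -> X -> R) : Prop :=
  is_frame E xs fs /\
  forall x, E x -> exists M : R, forall n : nat,
    `| \sum_(k < n) labs join ((fs k x) *: xs k) | <= M.

Definition dual_set {R : realType} (X : normedModType R) : set (X -> R) :=
  in_dual_of (@setT X).

Definition dual_norm {R : realType} {X : normedModType R} (f : X -> R) : R :=
  sup [set `|f x| | x in [set x : X | `|x| <= 1]].

(* X^** : bounded linear functionals on X^* (values outside X^* irrelevant) *)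
Definition bidual_set {R : realType} (X : normedModType R) : set ((X -> R) -> R) :=
  fun phi =>
    (forall (a b : R) f g, @dual_set _ X f -> @dual_set _ X g ->
        phi (fun x => a * f x + b * g x) = a * phi f + b * phi g) /\
    (exists C : R, forall f, @dual_set _ X f -> `|phi f| <= C * dual_norm f).

Definition dual_pos {R : realType} {X : normedModType R} (le : X -> X -> Prop)
    (f : X -> R) : Prop :=
  forall x, le 0 x -> 0 <= f x.

Definition bidual_le {R : realType} {X : normedModType R} (le : X -> X -> Prop)
    (phi psi : (X -> R) -> R) : Prop :=
  forall f, @dual_set _ X f -> dual_pos le f -> phi f <= psi f.

Definition bidual_emb {R : realType} {X : normedModType R} (x : X) : (X -> R) -> R :=
  fun f => f x.

From HB Require Import structures.
From mathcomp Require Import all_boot all_order all_algebra.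
From mathcomp Require Import all_classical all_reals all_analysis.
Import Order.TTheory GRing.Theory Num.Theory.
Import numFieldNormedType.Exports.
Local Open Scope classical_set_scope.
Local Open Scope ring_scope.

(* Write a_k := f_k(x) x_k, y_n := sum_(k<n) a_k and u_n := sum_(k<n) |a_k|.
   The u_n increase, are norm bounded, and |y_N - y_n| <= u_N - u_n for n <= N.
   If s is the supremum of the u_n, then s - u_m decreases to 0, and letting
   N -> oo in y_N - y_n <= s - u_m (the positive cone is closed) gives
   |y_n - x| <= s - u_m for n >= m, which is order convergence.  In X** the
   supremum always exists: it is the weak* limit f |-> lim_N f(u_N), which
   exists for every f in X* because splitting the terms according to the sign
   of f(|a_k|) bounds sum_k |f(|a_k|)| by 2 ||f|| sup_N ||u_N||. *)

Definition increments_dominated {V : zmodType} (le : V -> V -> Prop)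
    (y u : nat -> V) : Prop :=
  forall n N, (n <= N)%N -> le (y N - y n) (u N - u n) /\ le (y n - y N) (u N - u n).

Definition bounds_pass_to_limit {V : Type} (le : V -> V -> Prop)
    (y : nat -> V) (l : V) : Prop :=
  (forall w, (\forall N \near \oo, le (y N) w) -> le l w) /\
  (forall w, (\forall N \near \oo, le w (y N)) -> le w l).

Lemma directed_leq : directed (fun m n : nat => (m <= n)%N).
Proof.
split; first exact: inhabits 0%N.
split; first exact: leqnn.
split; first by move=> ? ? ?; exact: leq_trans.
by move=> m n; exists (maxn m n); rewrite leq_maxl leq_maxr.
Qed.

Section OrderedGroup.
Context {V : zmodType} {le : V -> V -> Prop}.
Hypothesis le_addr : forall a b c, le a b -> le (a + c) (b + c).

Lemma ogrp_le_addr a b c : le (a + c) (b + c) <-> le a b.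
Proof. by split=> [/(le_addr _ _ (- c))|/le_addr//]; rewrite !addrK. Qed.

Lemma ogrp_le_subl a b c : le (a - c) b <-> le a (b + c).
Proof. by rewrite -(ogrp_le_addr _ _ c) subrK. Qed.

Lemma ogrp_le_subr a b c : le a (b - c) <-> le (a + c) b.
Proof. by rewrite -(ogrp_le_addr _ _ c) subrK. Qed.

Lemma ogrp_le_subC a b c : le (a - b) c <-> le (a - c) b.
Proof. by rewrite ogrp_le_subl addrC -ogrp_le_subl. Qed.

Lemma ogrp_subr_ge0 a b : le 0 (b - a) <-> le a b.
Proof. by rewrite ogrp_le_subr add0r. Qed.

Lemma ogrp_le_opp {a b} : le a b -> le (- b) (- a).
Proof. by move/(le_addr _ _ (- a - b)); rewrite addrA subrr add0r addrCA subrr addr0. Qed.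

Hypothesis le_transitive : forall a b c, le a b -> le b c -> le a c.

Lemma ogrp_leD {a b c d} : le a b -> le c d -> le (a + c) (b + d).
Proof.
move=> /(le_addr _ _ c) ab /(le_addr _ _ b) cd; apply: le_transitive ab _.
by rewrite [b + c]addrC [b + d]addrC.
Qed.

Hypothesis le_reflexive : forall a, le a a.

Lemma ogrp_le_sum {I : Type} (r : seq I) (P : pred I) (F G : I -> V) :
  (forall i, P i -> le (F i) (G i)) ->
  le (\sum_(i <- r | P i) F i) (\sum_(i <- r | P i) G i).
Proof. by apply: big_ind2; [exact: le_reflexive | move=> *; exact: ogrp_leD]. Qed.

Section SubSup.
Context {S : set V} {u : nat -> V} {s : V}.
Hypothesis S_sub : forall a b, S a -> S b -> S (a - b).
Hypothesis S_u : forall n, S (u n).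
Hypothesis u_sup : is_sup S le (range u) s.

Lemma is_inf_sub_sup : is_inf S le (range (fun m => s - u m)) 0.
Proof.
have [Ss [s_ub s_least]] := u_sup.
split; first by rewrite -(subrr s); exact: S_sub.
split; first by move=> _ [m _ <-]; apply/ogrp_subr_ge0/s_ub; exists m.
move=> w Sw w_lb; apply/ogrp_subr_ge0; rewrite sub0r.
have : le s (s - w).
  apply: s_least; first exact: S_sub.
  move=> _ [m _ <-]; apply/ogrp_le_subr; rewrite addrC.
  by apply/ogrp_le_subr/w_lb; exists m.
by move/ogrp_subr_ge0; rewrite addrC addKr.
Qed.

Hypothesis u_nondecr : forall m n, (m <= n)%N -> le (u m) (u n).

Lemma sub_sup_tail_bound (y : nat -> V) (l : V) b n :
  bounds_pass_to_limit le y l -> increments_dominated le y u -> (b <= n)%N ->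
  le (y n - l) (s - u b) /\ le (- (y n - l)) (s - u b).
Proof.
move=> [lim_ub lim_lb] dom bn.
have [_ [s_ub _]] := u_sup.
have incr_le N : (n <= N)%N -> le (u N - u n) (s - u b).
  move=> nN; apply: ogrp_leD; first by apply: s_ub; exists N.
  exact/ogrp_le_opp/u_nondecr.
split.
  apply/ogrp_le_subC; apply: lim_lb.
  apply: filterS (nbhs_infty_ge n) => N nN; apply/ogrp_le_subC.
  by apply: le_transitive (incr_le N nN); exact: (dom n N nN).2.
rewrite opprB; apply/ogrp_le_subl; apply: lim_ub.
apply: filterS (nbhs_infty_ge n) => N nN; apply/ogrp_le_subl.
by apply: le_transitive (incr_le N nN); exact: (dom n N nN).1.
Qed.

Lemma ocvg_sub_sup (y : nat -> V) (l : V) :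
  bounds_pass_to_limit le y l -> increments_dominated le y u -> ocvg S le y l.
Proof.
move=> lim dom; exists nat, (fun m n => (m <= n)%N), (fun m => s - u m).
split; first exact: directed_leq.
split; first by move=> m; apply: S_sub => //; case: u_sup.
split.
  by move=> m n mn; rewrite ![s - _]addrC; exact/le_addr/ogrp_le_opp/u_nondecr.
split; first exact: is_inf_sub_sup.
by move=> b; exists b => n bn; exact: sub_sup_tail_bound.
Qed.

End SubSup.
End OrderedGroup.

Lemma sumr_ord_sub {V : zmodType} (v : nat -> V) n N : (n <= N)%N ->
  \sum_(k < N) v k - \sum_(k < n) v k = \sum_(n <= k < N) v k.
Proof.
move=> nN; have := @big_cat_nat V 0 +%R n 0 N xpredT v (leq0n n) nN.
by rewrite !big_mkord => ->; rewrite addrC addKr.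
Qed.

Section Dual.
Context {R : realType} {X : normedModType R} {f : X -> R}.
Hypothesis df : dual_set f.

Lemma dual_lin (p q : R) v w : f (p *: v + q *: w) = p * f v + q * f w.
Proof. by case: df => lin _; exact: lin. Qed.

Lemma dual0 : f 0 = 0.
Proof. by have := dual_lin 0 0 0 0; rewrite !scale0r addr0 !mul0r addr0. Qed.

Lemma dualD v w : f (v + w) = f v + f w.
Proof. by have := dual_lin 1 1 v w; rewrite !scale1r !mul1r. Qed.

Lemma dualZ (p : R) v : f (p *: v) = p * f v.
Proof. by have := dual_lin p 0 v 0; rewrite scale0r mul0r !addr0. Qed.

Lemma dualB v w : f (v - w) = f v - f w.
Proof. by rewrite dualD -scaleN1r dualZ mulN1r. Qed.

Lemma dual_sum (I : Type) (r : seq I) (P : pred I) (F : I -> X) :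
  f (\sum_(i <- r | P i) F i) = \sum_(i <- r | P i) f (F i).
Proof. exact: (big_morph f dualD dual0). Qed.

Lemma dual_norm_has_ubound : has_ubound [set `|f w| | w in [set w : X | `|w| <= 1]].
Proof.
case: df => _ [C fC]; exists (Num.max C 0) => _ [w /= w1 <-].
apply: le_trans (fC w I) _; have [C0|C0] := leP 0 C.
  by rewrite ler_piMr.
by rewrite nmulr_rle0.
Qed.

Lemma dual_norm_ge0 : 0 <= dual_norm f.
Proof.
apply: le_trans (ub_le_sup dual_norm_has_ubound _); first exact: (normr_ge0 (f 0)).
by exists 0; rewrite /= ?normr0 ?ler01.
Qed.

Lemma dual_norm_bound v : `|f v| <= dual_norm f * `|v|.
Proof.
have [->|v0] := eqVneq v 0; first by rewrite dual0 !normr0 mulr0.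
have v_gt0 : 0 < `|v| by rewrite normr_gt0.
have : `|f (`|v|^-1 *: v)| <= dual_norm f.
  apply: ub_le_sup; first exact: dual_norm_has_ubound.
  by exists (`|v|^-1 *: v) => //=; rewrite normrZ normfV normr_id mulVf // gt_eqF.
by rewrite dualZ normrM normfV normr_id ler_pdivrMl // mulrC.
Qed.

Lemma dual_cvg {v : nat -> X} {l : X} :
  v @ \oo --> l -> (fun N => f (v N)) @ \oo --> f l.
Proof.
move=> /cvgrPdist_lt vl; apply/cvgrPdist_lt => e e_gt0.
have fn_gt0 : 0 < dual_norm f + 1 by rewrite ltr_wpDl ?ler01 ?dual_norm_ge0.
apply: filterS (vl _ (divr_gt0 e_gt0 fn_gt0)) => N lvN.
rewrite -dualB; apply: le_lt_trans (dual_norm_bound _) _.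
apply: (@le_lt_trans _ _ ((dual_norm f + 1) * `|l - v N|)).
  by rewrite ler_wpM2r // lerDl ler01.
by rewrite mulrC -ltr_pdivlMr.
Qed.

End Dual.

Section Bidual.
Context {R : realType} {X : normedModType R} {le : X -> X -> Prop}.

Lemma bidual_set_emb (v : X) : bidual_set (bidual_emb v).
Proof.
split=> [p q f g _ _ //|]; exists `|v| => f df.
by rewrite mulrC; exact: dual_norm_bound.
Qed.

Lemma bidual_set_sub (phi psi : (X -> R) -> R) :
  bidual_set phi -> bidual_set psi -> bidual_set (phi - psi).
Proof.
move=> [phi_lin [C phiC]] [psi_lin [D psiD]]; split.
  move=> p q f g df dg; rewrite !fctE phi_lin // psi_lin //.
  by rewrite !mulrBr opprD !addrA; congr (_ - _); rewrite addrAC.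
exists (C + D) => f df /=; apply: le_trans (ler_normB _ _) _.
by rewrite mulrDl; exact: lerD (phiC f df) (psiD f df).
Qed.

Lemma bidual_le_addr (phi psi chi : (X -> R) -> R) :
  bidual_le le phi psi -> bidual_le le (phi + chi) (psi + chi).
Proof. by move=> le_phi f df fpos /=; rewrite lerD2r le_phi. Qed.

Lemma bidual_le_trans (phi psi chi : (X -> R) -> R) :
  bidual_le le phi psi -> bidual_le le psi chi -> bidual_le le phi chi.
Proof. by move=> h1 h2 f df fpos; exact: le_trans (h1 f df fpos) (h2 f df fpos). Qed.

Lemma bidual_emb_bounds_pass_to_limit (y : nat -> X) (l : X) :
  y @ \oo --> l ->
  bounds_pass_to_limit (bidual_le le) (fun n => bidual_emb (y n)) (bidual_emb l).
Proof.
move=> yl; split=> w ev f df fpos; rewrite /bidual_emb.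
  apply: (cvgr_to_le (dual_cvg df yl)).
  by apply: filterS ev => N; apply.
apply: (cvgr_to_ge (dual_cvg df yl)).
by apply: filterS ev => N; apply.
Qed.

Hypothesis le_addr : forall a b c, le a b -> le (a + c) (b + c).

Lemma dual_pos_le {f : X -> R} {v w : X} :
  dual_set f -> dual_pos le f -> le v w -> f v <= f w.
Proof. by move=> df fpos /(ogrp_subr_ge0 le_addr)/fpos; rewrite dualB // subr_ge0. Qed.

Lemma bidual_le_emb (v w : X) : le v w -> bidual_le le (bidual_emb v) (bidual_emb w).
Proof. by move=> vw f df fpos; exact: dual_pos_le. Qed.

Lemma bidual_emb_increments_dominated (y u : nat -> X) :
  increments_dominated le y u ->
  increments_dominated (bidual_le le)
    (fun n => bidual_emb (y n)) (fun n => bidual_emb (u n)).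
Proof.
move=> dom n N nN; have [dom1 dom2] := dom n N nN.
by split=> f df fpos; rewrite !fctE /bidual_emb -!(dualB df); exact: dual_pos_le.
Qed.

Definition bidual_lim (w : nat -> X) : (X -> R) -> R :=
  fun f => limn (fun N => f (w N)).

Section WeakStarLimit.
Context {w : nat -> X} {M : R}.
Hypothesis w_bounded : forall N, `|w N| <= M.
Hypothesis w_cvg : forall f, dual_set f -> cvgn (fun N => f (w N)).

Lemma bidual_set_lim : bidual_set (bidual_lim w).
Proof.
split=> [p q f g df dg|].
  apply: cvg_lim => //; apply: cvgD; apply: cvgMl_tmp; exact: w_cvg.
exists M => f df; have fw_le N : - (dual_norm f * M) <= f (w N) <= dual_norm f * M.
  rewrite -ler_norml; apply: le_trans (dual_norm_bound df _) _.
  by rewrite ler_wpM2l ?dual_norm_ge0.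
rewrite /bidual_lim mulrC ler_norml; apply/andP; split.
  by apply: limr_ge (w_cvg _ df) _; apply: nearW => N; case/andP: (fw_le N).
by apply: limr_le (w_cvg _ df) _; apply: nearW => N; case/andP: (fw_le N).
Qed.

Hypothesis w_nondecr : forall m n, (m <= n)%N -> le (w m) (w n).

Lemma is_sup_bidual_lim :
  is_sup (@bidual_set _ X) (bidual_le le)
    (range (fun n => bidual_emb (w n))) (bidual_lim w).
Proof.
split; first exact: bidual_set_lim.
split=> [_ [m _ <-] f df fpos|phi _ phi_ub f df fpos].
  apply: limr_ge (w_cvg _ df) _; apply: filterS (nbhs_infty_ge m) => N mN.
  exact/(dual_pos_le df fpos)/w_nondecr.
apply: limr_le (w_cvg _ df) _; apply: nearW => N.
by apply: (phi_ub (bidual_emb (w N))) => //; exists N.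
Qed.

End WeakStarLimit.
End Bidual.

Section BanachLattice.
Context {R : realType} {X : completeNormedModType R}
  {le : X -> X -> Prop} {join : X -> X -> X}.
Hypothesis HB : is_banach_lattice le join.

Lemma bl_refl x : le x x.
Proof. by case: HB. Qed.

Lemma bl_anti [x y] : le x y -> le y x -> x = y.
Proof. by case: HB => _ [h _]; apply: h. Qed.

Lemma bl_trans [x y z] : le x y -> le y z -> le x z.
Proof. by case: HB => _ [_ [h _]]; apply: h. Qed.

Lemma bl_addr [x y z] : le x y -> le (x + z) (y + z).
Proof. by case: HB => _ [_ [_ [h _]]]; apply: h. Qed.

Lemma bl_scale (r : R) x y : 0 <= r -> le x y -> le (r *: x) (r *: y).
Proof. by case: HB => _ [_ [_ [_ [h _]]]]; apply: h. Qed.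

Lemma bl_join_sup x y : is_sup setT le [set x; y] (join x y).
Proof. by case: HB => _ [_ [_ [_ [_ [h _]]]]]; apply: h. Qed.

Lemma bl_norm_abs_mono [x y] : le (labs join x) (labs join y) -> `|x| <= `|y|.
Proof. by case: HB => _ [_ [_ [_ [_ [_ h]]]]]; apply: h. Qed.

Lemma bl_join_gel x y : le x (join x y).
Proof. by have [_ [+ _]] := bl_join_sup x y; apply; left. Qed.

Lemma bl_join_ger x y : le y (join x y).
Proof. by have [_ [+ _]] := bl_join_sup x y; apply; right. Qed.

Lemma bl_join_le [x y z] : le x z -> le y z -> le (join x y) z.
Proof. by move=> xz yz; have [_ [_]] := bl_join_sup x y; apply=> // _ [->|->]. Qed.

Lemma bl_abs_ge x : le x (labs join x).
Proof. exact: bl_join_gel. Qed.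

Lemma bl_abs_geN x : le (- x) (labs join x).
Proof. exact: bl_join_ger. Qed.

Lemma bl_abs_ge0 x : le 0 (labs join x).
Proof.
have := ogrp_leD bl_addr bl_trans (bl_abs_ge x) (bl_abs_geN x).
rewrite subrr -mulr2n -scaler_nat => two_abs.
have half_ge0 : 0 <= (2 : R)^-1 by rewrite invr_ge0 ler0n.
have := bl_scale _ _ _ half_ge0 two_abs.
by rewrite scaler0 scalerA mulVf ?pnatr_eq0 // scale1r.
Qed.

Lemma bl_abs_id [v] : le 0 v -> labs join v = v.
Proof.
move=> v0; apply: bl_anti (bl_abs_ge v).
apply: bl_join_le (bl_refl v) (bl_trans _ v0).
by have := ogrp_le_opp bl_addr v0; rewrite oppr0.
Qed.

Lemma bl_norm_abs v : `|labs join v| = `|v|.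
Proof.
have absK : labs join (labs join v) = labs join v := bl_abs_id (bl_abs_ge0 v).
by apply/eqP; rewrite eq_le !bl_norm_abs_mono // absK; exact: bl_refl.
Qed.

Lemma bl_norm_le [v w] : le 0 v -> le v w -> `|v| <= `|w|.
Proof.
move=> v0 vw; apply: bl_norm_abs_mono.
by rewrite (bl_abs_id v0) (bl_abs_id (bl_trans v0 vw)).
Qed.

(* With l^- := (-l) v 0, every c >= 0 gives 0 <= l^- <= |l - c|, so
   ||l^-|| <= ||l - c_N|| -> 0. *)
Lemma bl_closed_cone (c : nat -> X) (l : X) :
  c @ \oo --> l -> (\forall N \near \oo, le 0 (c N)) -> le 0 l.
Proof.
move=> cl c_ge0; set p := join (- l) 0.
have p_ge0 : le 0 p by exact: bl_join_ger.
have p_le N : le 0 (c N) -> `|p| <= `|l - c N|.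
  move=> cN; rewrite -[`|l - c N|]bl_norm_abs; apply: bl_norm_le p_ge0 _.
  apply: bl_join_le (bl_abs_ge0 _); apply: bl_trans (bl_abs_geN _).
  by rewrite opprB -[X in le X _]add0r; exact: bl_addr.
have : `|p| <= `|l - l|.
  apply: (cvgr_to_ge (cvg_norm (cvgB (cvg_cst l) cl))).
  by apply: filterS c_ge0 => N; exact: p_le.
rewrite subrr normr0 normr_le0 => /eqP p0.
by have := ogrp_le_opp bl_addr (bl_join_gel (- l) 0); rewrite -/p p0 opprK oppr0.
Qed.

Lemma bl_bounds_pass_to_limit (y : nat -> X) (l : X) :
  y @ \oo --> l -> bounds_pass_to_limit le y l.
Proof.
move=> yl; split=> w ev; apply/(ogrp_subr_ge0 bl_addr).
  apply: (bl_closed_cone (fun N => w - y N)); first exact: (cvgB (cvg_cst w) yl).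
  by apply: filterS ev => N; rewrite ogrp_subr_ge0 //; exact: bl_addr.
apply: (bl_closed_cone (fun N => y N - w)); first exact: (cvgB yl (cvg_cst w)).
by apply: filterS ev => N; rewrite ogrp_subr_ge0 //; exact: bl_addr.
Qed.

Lemma bl_psum_nondecr (v : nat -> X) m n : (forall k, le 0 (v k)) -> (m <= n)%N ->
  le (\sum_(k < m) v k) (\sum_(k < n) v k).
Proof.
move=> v_ge0 mn; apply/(ogrp_subr_ge0 bl_addr); rewrite sumr_ord_sub //.
have := ogrp_le_sum bl_addr bl_trans bl_refl (index_iota m n) xpredT (fun=> 0) v.
by rewrite big1_eq; apply=> k _.
Qed.

Lemma bl_psum_increments_dominated (a : nat -> X) :
  increments_dominated le (fun n => \sum_(k < n) a k)
    (fun n => \sum_(k < n) labs join (a k)).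
Proof.
move=> n N nN; rewrite -[\sum_(k < n) a k - _]opprB !sumr_ord_sub // -sumrN.
rewrite (sumr_ord_sub (fun k => labs join (a k))) //.
by split; apply: (ogrp_le_sum bl_addr bl_trans bl_refl) => k _;
  [exact: bl_abs_ge | exact: bl_abs_geN].
Qed.

Lemma bl_psum_abs_nondecr (a : nat -> X) m n : (m <= n)%N ->
  le (\sum_(k < m) labs join (a k)) (\sum_(k < n) labs join (a k)).
Proof. exact: bl_psum_nondecr (fun k => labs join (a k)) m n (fun k => bl_abs_ge0 _). Qed.

Lemma ocvg_series_abs_bounded (a : nat -> X) (l : X) (M : R) :
  sigma_monotonically_complete le ->
  (fun n => \sum_(k < n) a k) @ \oo --> l ->
  (forall n, `|\sum_(k < n) labs join (a k)| <= M) ->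
  ocvg setT le (fun n => \sum_(k < n) a k) l.
Proof.
move=> smc al uM; set u := fun n => \sum_(k < n) labs join (a k).
have u_nondecr := bl_psum_abs_nondecr a.
have u_ge0 n : le 0 (u n) by have := u_nondecr 0%N n (leq0n n); rewrite /u big_ord0.
have [s u_sup] := smc u u_ge0 (fun n => u_nondecr n n.+1 (leqnSn n)) (ex_intro _ M uM).
apply: (ocvg_sub_sup bl_addr bl_trans (fun _ _ _ _ => I) (fun _ => I) u_sup u_nondecr).
  exact: bl_bounds_pass_to_limit.
exact: bl_psum_increments_dominated.
Qed.

(* Split the sum according to the sign of f (v k): both halves are positive
   and below the whole sum, hence of norm at most M. *)
Lemma bl_dual_sum_abs_le (v : nat -> X) (f : X -> R) (M : R) N :
  dual_set f -> (forall k, le 0 (v k)) -> `|\sum_(k < N) v k| <= M ->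
  \sum_(k < N) `|f (v k)| <= (dual_norm f * M) *+ 2.
Proof.
move=> df v_ge0 vM; pose P := fun k : 'I_N => 0 <= f (v k).
pose vp := \sum_(k < N | P k) v k; pose vn := \sum_(k < N | ~~ P k) v k.
have sum_ge0 (Q : pred 'I_N) : le 0 (\sum_(k < N | Q k) v k).
  have := ogrp_le_sum bl_addr bl_trans bl_refl (index_enum 'I_N) Q (fun=> 0) v.
  by rewrite big1_eq; apply=> k _.
have vpn : \sum_(k < N) v k = vp + vn by rewrite (bigID P).
have vp_le : `|vp| <= M.
  apply: le_trans vM; apply: bl_norm_le (sum_ge0 _) _.
  rewrite vpn -[X in le X _]addr0.
  exact: (ogrp_leD bl_addr bl_trans (bl_refl _) (sum_ge0 _)).
have vn_le : `|vn| <= M.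
  apply: le_trans vM; apply: bl_norm_le (sum_ge0 _) _.
  rewrite vpn -[X in le X _]add0r.
  exact: (ogrp_leD bl_addr bl_trans (sum_ge0 _) (bl_refl _)).
have -> : \sum_(k < N) `|f (v k)| = f vp - f vn.
  rewrite (bigID P) /= !(dual_sum df) -sumrN; congr (_ + _); apply: eq_bigr => k.
    by move=> fk; rewrite ger0_norm.
  by rewrite -ltNge => fk; rewrite ltr0_norm.
apply: le_trans (ler_norm _) _; apply: le_trans (ler_normB _ _) _.
by rewrite mulr2n; apply: lerD; apply: le_trans (dual_norm_bound df _) _;
  rewrite ler_wpM2l ?dual_norm_ge0.
Qed.

Lemma bl_dual_psum_cvg (v : nat -> X) (f : X -> R) (M : R) :
  dual_set f -> (forall k, le 0 (v k)) -> (forall N, `|\sum_(k < N) v k| <= M) ->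
  cvgn (fun N => f (\sum_(k < N) v k)).
Proof.
move=> df v_ge0 vM.
have -> : (fun N => f (\sum_(k < N) v k)) = series (fun k => f (v k)).
  by apply/funext => N; rewrite seriesEord (dual_sum df).
apply: normed_cvg; apply: nondecreasing_is_cvgn.
  by apply/nondecreasing_seqP => n; rewrite /normed_series_of /= seriesSr lerDl.
exists ((dual_norm f * M) *+ 2) => _ [N _ <-].
by rewrite /normed_series_of /= seriesEord; exact: bl_dual_sum_abs_le.
Qed.

Lemma ocvg_bidual_series_abs_bounded (a : nat -> X) (l : X) (M : R) :
  (fun n => \sum_(k < n) a k) @ \oo --> l ->
  (forall n, `|\sum_(k < n) labs join (a k)| <= M) ->
  ocvg (@bidual_set _ X) (bidual_le le)
    (fun n => bidual_emb (\sum_(k < n) a k)) (bidual_emb l).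
Proof.
move=> al uM; have u_nondecr := bl_psum_abs_nondecr a.
have u_cvg f : dual_set f -> cvgn (fun N => f (\sum_(k < N) labs join (a k))).
  by move=> df; apply: bl_dual_psum_cvg df (fun k => bl_abs_ge0 _) uM.
apply: (ocvg_sub_sup bidual_le_addr bidual_le_trans bidual_set_sub
  (fun n => bidual_set_emb _) (is_sup_bidual_lim bl_addr uM u_cvg u_nondecr)).
- by move=> m n mn; apply: bidual_le_emb bl_addr _ _ (u_nondecr m n mn).
- exact: bidual_emb_bounds_pass_to_limit.
- exact: bidual_emb_increments_dominated bl_addr _ _ (bl_psum_increments_dominated a).
Qed.

End BanachLattice.

Theorem proposition3p17 :
  (forall (R : realType) (X : completeNormedModType R)
      (le : X -> X -> Prop) (join : X -> X -> X)
      (E : set X) (xs : nat -> X) (fs : nat -> X -> R),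
    is_banach_lattice le join -> sigma_monotonically_complete le ->
    closed_subspace E -> is_absolute_frame join E xs fs ->
    forall x, E x -> ocvg setT le (frame_psum xs fs x) x)
  /\
  (forall (R : realType) (X : completeNormedModType R)
      (le : X -> X -> Prop) (join : X -> X -> X)
      (E : set X) (xs : nat -> X) (fs : nat -> X -> R),
    is_banach_lattice le join ->
    closed_subspace E -> is_absolute_frame join E xs fs ->
    forall x, E x ->
      ocvg (@bidual_set _ X) (bidual_le le)
        (fun n => bidual_emb (frame_psum xs fs x n)) (bidual_emb x)).
Proof.
split=> [R X le join E xs fs HB smc | R X le join E xs fs HB] _
    [[_ [_ expansion]] absolute] x Ex; have [M uM] := absolute x Ex.
  exact: (ocvg_series_abs_bounded HB (fun k => fs k x *: xs k) x M smc (expansion x Ex) uM).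
exact: (ocvg_bidual_series_abs_bounded HB (fun k => fs k x *: xs k) x M (expansion x Ex) uM).
Qed.
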